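(* Let $G$ be a connected graph and let $S\subseteq V(G)$. The following statements are equivalent: (1) there is a GS ordering of $G$ whose $\mathcal{F}$-tree has all elements of $S$ as leaves; (2) there is a spanning tree of $G$ in which all elements of $S$ are leaves; (3) the set $V(G)\setminus S$ is a connected dominating set of $G$.
   Context: All graphs are finite, simple, undirected, connected and non-empty. A GS (generic search) ordering of $G$ is an ordering $(v_1,\dots,v_n)$ of $V(G)$ such that every $v_i$ with $i>1$ has a neighbor among $v_1,\dots,v_{i-1}$. Its $\mathcal{F}$-tree is the spanning tree rooted at $v_1$ in which the parent of $v_i$ ($i>1$) is its neighbor appearing leftmost in the ordering. Spanning trees are rooted; a leaf is a non-root vertex without children (the root is never a leaf). A connected dominating set is a set $D\subseteq V(G)$ such that $G[D]$ is connected and every vertex outside $D$ has a neighbor in $D$. *)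

From mathcomp Require Import all_boot.
Set Implicit Arguments. Unset Strict Implicit. Unset Printing Implicit Defensive.

Definition simple_graph (T : finType) (e : rel T) : Prop :=
  symmetric e /\ irreflexive e.

Definition graph_connected (T : finType) (e : rel T) : Prop :=
  0 < #|T| /\ forall x y : T, connect e x y.

Definition GS_ordering (T : finType) (e : rel T) (s : seq T) : Prop :=
  perm_eq s (enum T) /\
  {in s, forall v, 0 < index v s -> has (e v) (take (index v s) s)}.

Definition Fparent (T : finType) (e : rel T) (s : seq T) (v : T) : T :=
  let pre := take (index v s) s in nth v pre (find (e v) pre).

(* Rooted spanning tree given by a root r and a parent map p:
   every non-root vertex is adjacent to its parent, and iterating the
   parent map from any vertex reaches the root. *)
Definition rooted_spanning_tree (T : finType) (e : rel T) (r : T) (p : T -> T)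
  : Prop :=
  (forall v, v != r -> e v (p v)) /\ (forall v, exists k, iter k p v = r).

Definition is_leaf (T : finType) (r : T) (p : T -> T) (v : T) : bool :=
  (v != r) && [forall u, (u != r) ==> (p u != v)].

Definition induced_connected (T : finType) (e : rel T) (D : {set T}) : Prop :=
  D != set0 /\
  {in D &, forall x y, connect [rel a b | [&& e a b, a \in D & b \in D]] x y}.

Definition dominating (T : finType) (e : rel T) (D : {set T}) : Prop :=
  forall v, v \notin D -> exists2 u, u \in D & e v u.

Definition connected_dominating (T : finType) (e : rel T) (D : {set T}) : Prop :=
  induced_connected e D /\ dominating e D.

(* The F-tree of a GS ordering is a spanning tree, since the parent of each
   vertex is an earlier neighbour.  In a spanning tree whose leaves include S,
   every parent lies outside S, so walking up to the root stays inside V \ S,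
   and the parent of a vertex of S dominates it.  Conversely, when V \ S is a
   connected dominating set, search G[V \ S] first and append S at the end:
   every vertex of S then finds its leftmost neighbour in V \ S, so no vertex
   of S is a parent in the F-tree. *)

From mathcomp Require Import all_boot.
Set Implicit Arguments. Unset Strict Implicit.

Section GenericSearch.

Variables (T : finType) (e : rel T).

Definition gs_seq (l : seq T) : Prop :=
  {in l, forall v, 0 < index v l -> has (e v) (take (index v l) l)}.

Definition induced_rel (D : {set T}) : rel T :=
  [rel a b | [&& e a b, a \in D & b \in D]].

Lemma gs_seq_cat (l1 l2 : seq T) :
  gs_seq l1 -> {in l2, forall v, has (e v) l1} -> gs_seq (l1 ++ l2).
Proof.
move=> gs1 adj2 v; rewrite mem_cat index_cat take_cat.
case: ifP => [vl1 _|_ /= vl2 _]; first by rewrite index_mem vl1; apply: gs1.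
by rewrite ltnNge leq_addr /= has_cat adj2.
Qed.

Lemma Fparent_spec (l : seq T) (v : T) :
  has (e v) (take (index v l) l) ->
  Fparent e l v \in take (index v l) l /\ e v (Fparent e l v).
Proof.
by move=> adj; split; [apply: mem_nth; rewrite -has_find | apply: nth_find].
Qed.

Lemma Fparent_cat_mem (l1 l2 : seq T) (v : T) :
  (v \in l1) || has (e v) l1 -> Fparent e (l1 ++ l2) v \in l1.
Proof.
rewrite /Fparent index_cat; have [vl1 _|_ /= adj] := boolP (v \in l1).
  rewrite take_cat index_mem vl1; set pre := take _ l1.
  have [lt_find|ge_find] := ltnP (find (e v) pre) (size pre).
    exact: mem_take (mem_nth _ lt_find).
  by rewrite nth_default.
rewrite take_cat ltnNge leq_addr /= find_cat nth_cat adj.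
by have := adj; rewrite has_find => lt_find; rewrite lt_find mem_nth.
Qed.

Lemma rooted_spanning_tree_of_rank (r : T) (p : T -> T) (rank : T -> nat) :
  (forall v, v != r -> e v (p v) /\ rank (p v) < rank v) ->
  rooted_spanning_tree e r p.
Proof.
move=> par; split=> [v /par[] //|v].
elim: {v}(rank v) {-2}v (leqnn (rank v)) => [|n IHn] v le_rank.
  have [->|/par[_]] := eqVneq v r; first by exists 0.
  by rewrite ltnNge (leq_trans le_rank).
have [->|/par[_ lt_rank]] := eqVneq v r; first by exists 0.
have [k iter_k] := IHn (p v) (leq_trans lt_rank le_rank).
by exists k.+1; rewrite iterSr.
Qed.

Lemma GS_ordering_rooted_spanning_tree (r : T) (s : seq T) :
  GS_ordering e (r :: s) -> rooted_spanning_tree e r (Fparent e (r :: s)).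
Proof.
case=> perm_all gs; apply: rooted_spanning_tree_of_rank (index^~ (r :: s)) _.
move=> v vr; have vs : v \in r :: s by rewrite (perm_mem perm_all) mem_enum.
have idx_pos : 0 < index v (r :: s) by rewrite /= eq_sym (negbTE vr).
by have [/index_ltn lt_idx adj] := Fparent_spec (gs v vs idx_pos).
Qed.

Lemma parent_not_leaf (r : T) (p : T -> T) (v : T) :
  v != r -> ~~ is_leaf r p (p v).
Proof.
by move=> vr; apply/andP=> -[_ /forallP/(_ v)]; rewrite vr eqxx.
Qed.

Lemma connect_exit (f : rel T) (a : pred T) (x y : T) :
  connect f x y -> a x -> ~~ a y -> exists u v, [/\ f u v, a u & ~~ a v].
Proof.
move=> /connectP[q fq ->].
elim: q x fq => [|z q IHq] x /=; first by move=> _ ->.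
case/andP=> fxz fq ax; have [az|naz] := boolP (a z); first exact: IHq.
by exists x, z.
Qed.

Hypothesis e_sym : symmetric e.

Lemma connected_dominating_of_parent_closed (D : {set T}) (r : T) (p : T -> T) :
  rooted_spanning_tree e r p -> r \in D -> (forall v, v != r -> p v \in D) ->
  connected_dominating e D.
Proof.
move=> [adj reach] rD pD.
have connect_root x : x \in D -> connect (induced_rel D) x r.
  have [k] := reach x; elim: k x => [|k IHk] x iter_k xD.
    by rewrite -iter_k connect0.
  have [-> //|xr] := eqVneq x r.
  rewrite iterSr in iter_k; apply: connect_trans (IHk _ iter_k (pD _ xr)).
  by apply: connect1; rewrite /induced_rel /= adj // xD pD.
have sym_induced : symmetric (induced_rel D).
  by move=> a b; rewrite /induced_rel /= e_sym [(a \in D) && _]andbC.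
split.
  split=> [|x y xD yD]; first by apply/set0Pn; exists r.
  apply: connect_trans (connect_root x xD) _.
  by rewrite (sym_connect_sym sym_induced) connect_root.
move=> v vD; have vr : v != r by apply: contraNneq vD => ->.
by exists (p v); [apply: pD | apply: adj].
Qed.

Lemma gs_seq_spanning_induced (D : {set T}) (r : T) :
  r \in D -> {in D &, forall x y, connect (induced_rel D) x y} ->
  exists a, [/\ uniq (r :: a), r :: a =i D & gs_seq (r :: a)].
Proof.
move=> rD conn.
have grow n : n < #|D| -> exists2 a, size a = n &
    [/\ uniq (r :: a), {subset r :: a <= D} & gs_seq (r :: a)].
  elim: n => [_|n IHn lt_n].
    exists [::] => //; split=> // [x|v]; rewrite inE => /eqP-> //=.
    by rewrite eqxx.
  have [a size_a [uniq_a sub_a gs_a]] := IHn (ltnW lt_n).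
  have /subsetPn[x xD xa] : ~~ (D \subset r :: a).
    apply: contraTN lt_n => /subset_leq_card le_card.
    rewrite -leqNgt (leq_trans le_card) //.
    by rewrite (leq_trans (card_size _)) //= size_a.
  have [u [w [/and3P[euw uD wD] ua wa]]] :=
    connect_exit (a := mem (r :: a)) (conn r x rD xD) (mem_head r a) xa.
  exists (rcons a w); first by rewrite size_rcons size_a.
  rewrite -rcons_cons rcons_uniq wa uniq_a; split=> //.
    by move=> z; rewrite mem_rcons inE => /predU1P[->|/sub_a].
  rewrite -cats1; apply: gs_seq_cat => // z; rewrite inE => /eqP->.
  by apply/hasP; exists u; rewrite // e_sym.
have D_gt0 : 0 < #|D| by apply/card_gt0P; exists r.
have [a size_a [uniq_a sub_a gs_a]] := grow #|D|.-1 ltac:(by rewrite ltn_predL).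
have sub_enum : {subset r :: a <= enum D} by move=> x /sub_a; rewrite mem_enum.
have size_enum : size (enum D) <= size (r :: a).
  by rewrite -cardE /= size_a prednK.
have [_ eq_enum] := uniq_min_size uniq_a sub_enum size_enum.
by exists a; split=> // x; rewrite eq_enum mem_enum.
Qed.

Lemma connected_dominating_GS_ordering (S : {set T}) :
  connected_dominating e (~: S) ->
  exists r s, GS_ordering e (r :: s) /\
              {in S, forall v, is_leaf r (Fparent e (r :: s)) v}.
Proof.
move=> [[/set0Pn[r rD] conn] dom].
have [a [uniq_a mem_a gs_a]] := gs_seq_spanning_induced rD conn.
have adj_S v : v \in S -> has (e v) (r :: a).
  move=> vS; have [u uD evu] := dom v ltac:(by rewrite inE negbK).
  by apply/hasP; exists u; rewrite ?mem_a.
have notin_a v : v \in S -> v \notin r :: a by rewrite mem_a inE => ->.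
exists r, (a ++ enum S); rewrite -cat_cons; split.
  split; last by apply: gs_seq_cat => // v; rewrite mem_enum; apply: adj_S.
  apply: uniq_perm; [|exact: enum_uniq|move=> v].
    rewrite cat_uniq uniq_a enum_uniq andbT.
    by apply/hasPn => v; rewrite mem_enum; apply: notin_a.
  by rewrite mem_cat !mem_enum mem_a inE orNb.
move=> v vS; apply/andP; split.
  by apply: contraNneq (notin_a v vS) => ->; apply: mem_head.
apply/forallP => u; apply/implyP => _; apply: contraNneq (notin_a v vS) => <-.
apply: Fparent_cat_mem; have [uS|uS] := boolP (u \in S).
  by rewrite adj_S ?orbT.
by rewrite mem_a inE uS.
Qed.

End GenericSearch.

Theorem theorem3p5 (T : finType) (e : rel T) (S : {set T}) :
  simple_graph e -> graph_connected e ->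
  let P1 := exists (r : T) (s : seq T),
      GS_ordering e (r :: s) /\
      {in S, forall v, is_leaf r (Fparent e (r :: s)) v} in
  let P2 := exists (r : T) (p : T -> T),
      rooted_spanning_tree e r p /\ {in S, forall v, is_leaf r p v} in
  let P3 := connected_dominating e (~: S) in
  (P1 <-> P2) /\ (P2 <-> P3).
Proof.
(* Neither loops nor the connectivity of G matter: (2) and (3) each force G
   to be connected. *)
move=> [e_sym _] _ P1 P2 P3.
have P1P2 : P1 -> P2.
  case=> r [s [gs leaves]]; exists r, (Fparent e (r :: s)).
  by split; first exact: GS_ordering_rooted_spanning_tree.
have P2P3 : P2 -> P3.
  case=> r [p [tree leaves]].
  apply: (connected_dominating_of_parent_closed e_sym tree) => [|v vr];
    rewrite in_setC.
    by apply/negP => /leaves; rewrite /is_leaf eqxx.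
  exact: contra (leaves _) (parent_not_leaf p vr).
have P3P1 : P3 -> P1 by apply: connected_dominating_GS_ordering.
by split; split; [exact: P1P2 | move/P2P3/P3P1 | exact: P2P3 | move/P3P1/P1P2].
Qed.
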